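(* Let $\mathfrak g=\mathrm{span}_{i\mathbb R}\tilde{\mathfrak g}\subseteq\mathfrak{su}(2^n)$ be a Lie algebra spanned by $i$ times the Pauli strings in a set $\tilde{\mathfrak g}$, and let $b_1\ne b_2$ be two commuting Pauli strings in $\tilde{\mathfrak g}$ that lie in the same connected component of the frustration graph of $\mathfrak g$. Then their distance in the frustration graph is $2$; i.e. there exists a Pauli string $g\in\tilde{\mathfrak g}$ with $[g,b_1]\ne0$ and $[g,b_2]\ne0$.
   Context: Pauli strings on $n$ qubits are tensor products of $I,X,Y,Z$, not all identity; two Pauli strings either commute or anticommute. It is assumed that every Pauli string $\sigma$ with $i\sigma\in\mathfrak g$ belongs to $\tilde{\mathfrak g}$ (Pauli strings are considered up to sign/phase). The frustration graph of $\mathfrak g$ has vertex set $\tilde{\mathfrak g}$ and an edge between $\sigma,\tau$ iff $[\sigma,\tau]\neq0$. *)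

From HB Require Import structures.
From mathcomp Require Import all_boot all_order all_algebra all_field.
Set Implicit Arguments. Unset Strict Implicit. Unset Printing Implicit Defensive.
Import Order.TTheory GRing.Theory Num.Theory.
Local Open Scope ring_scope.

(* Pauli strings on n qubits: each qubit gets one of I (0), X (1), Y (2), Z (3).
   Pauli strings are considered up to phase, so we use these canonical labels. *)
Definition pauli_label (n : nat) := {ffun 'I_n -> 'I_4}.

Definition is_pauli_string n (s : pauli_label n) : bool := [exists k, s k != ord0].

(* single-qubit Pauli matrices, entries indexed by bits (false = |0>, true = |1>) *)
Definition pauli1 (p : 'I_4) (a b : bool) : algC :=
  match val p with
  | 0 => if a == b then 1 else 0
  | 1 => if a == b then 0 else 1
  | 2 => if a == b then 0 else if a then 'i else - 'i
  | _ => if a == b then (if a then -1 else 1) else 0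
  end.

Definition qbit (i : nat) (k : nat) : bool := odd (i %/ 2 ^ k).

(* the 2^n x 2^n matrix of the Pauli string s (tensor product of single-qubit
   Pauli matrices, qubit k corresponding to bit k of the basis index) *)
Definition pauli_mx n (s : pauli_label n) : 'M[algC]_(2 ^ n) :=
  \matrix_(i, j) \prod_(k < n) pauli1 (s k) (qbit i k) (qbit j k).

Definition mx_comm m (A B : 'M[algC]_m) : 'M[algC]_m := A *m B - B *m A.

Definition in_span_iR n (G : {set pauli_label n}) (M : 'M[algC]_(2 ^ n)) : Prop :=
  exists c : pauli_label n -> algC,
    (forall s, c s \is Num.real) /\
    M = \sum_(s in G) c s *: ('i *: pauli_mx s).

Definition frustr n (G : {set pauli_label n}) : rel (pauli_label n) :=
  fun s t => [&& s \in G, t \in G & mx_comm (pauli_mx s) (pauli_mx t) != 0].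

From mathcomp Require Import all_boot all_order all_algebra all_field.
From mathcomp Require Import ring.
Import GRing.Theory Num.Theory.
Local Open Scope ring_scope.
Set Implicit Arguments. Unset Strict Implicit.

(* Two Pauli strings either commute or anticommute, with a sign that is the parity
   of the number of qubits where they carry distinct non-identity labels.  If [u]
   and [y] in G anticommute, the real multiple [i u y] of their commutator
   [[i u, i y]] is [i] times a Pauli string [w], so [w] lies in G; moreover [z]
   anticommutes with [w] exactly when it anticommutes with one of [u], [y].
   Along a path from [b1] to [b2] in the frustration graph keep the invariant
   "the current vertex is [b1], a neighbour of [b1], or shares a neighbour [g]
   with [b1]".  The only delicate step is a next vertex [x] commuting with [g]
   while the current vertex [y] commutes with [b1]: then the string [w] of [g y]
   is a common neighbour of [b1] and [x].  At [b2], which is distinct from and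
   commutes with [b1], only the last alternative is left. *)

(* Single-qubit Pauli matrices multiply as [p q = qphase p q * qmul p q]. *)
Definition qmul (p q : 'I_4) : 'I_4 := inord (match val p, val q with
  | 0, r | r, 0 => r | 1, 2 | 2, 1 => 3 | 1, 3 | 3, 1 => 2 | 2, 3 | 3, 2 => 1
  | _, _ => 0 end).

Definition qphase (p q : 'I_4) : algC := match val p, val q with
  | 1, 2 | 2, 3 | 3, 1 => 'i | 2, 1 | 3, 2 | 1, 3 => - 'i | _, _ => 1 end.

Definition qanti (p q : 'I_4) : bool := [&& val p != 0, val q != 0 & val p != val q].

Ltac case_I4 p := case: p => [[|[|[|[|?]]]] //= ?].

Lemma pauli1_mul p q a b :
  pauli1 p a false * pauli1 q false b + pauli1 p a true * pauli1 q true b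
  = qphase p q * pauli1 (qmul p q) a b.
Proof.
have ii : 'i * 'i = -1 :> algC by rewrite -expr2 sqrCi.
case_I4 p; case_I4 q; case: a; case: b;
  rewrite /pauli1 /qphase /qmul /= ?inordK //=;
  by rewrite ?(mulr0, mul0r, mulr1, mul1r, addr0, add0r, mulrN, mulNr, opprK, ii).
Qed.

Lemma qmulC p q : qmul q p = qmul p q.
Proof. by apply: val_inj; case_I4 p; case_I4 q. Qed.

Lemma qmulxx p : qmul p p = ord0.
Proof. by apply: val_inj; case_I4 p; rewrite /qmul /= inordK. Qed.

Lemma qphaseC p q : qphase q p = (-1) ^+ qanti p q * qphase p q.
Proof. by case_I4 p; case_I4 q; rewrite /qphase /= ?mulN1r ?mul1r ?opprK. Qed.

Lemma qphase_sqr p q : qphase p q ^+ 2 = (-1) ^+ qanti p q.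
Proof. by case_I4 p; case_I4 q; rewrite /qphase /= ?sqrrN ?sqrCi ?expr1n. Qed.

Lemma qphasexx p : qphase p p = 1.
Proof. by case_I4 p. Qed.

Lemma qantiC p q : qanti q p = qanti p q.
Proof. by case_I4 p; case_I4 q. Qed.

Lemma qantixx p : qanti p p = false.
Proof. by case_I4 p. Qed.

Lemma qanti_mull p q r : qanti (qmul p q) r = qanti p r (+) qanti q r.
Proof. by case_I4 p; case_I4 q; case_I4 r; rewrite /qmul /qanti /= inordK. Qed.

Lemma qbit0n k : qbit 0 k = false.
Proof. by rewrite /qbit div0n. Qed.

Lemma qbit_small n l : (l < 2 ^ n)%N -> qbit l n = false.
Proof. by move=> ln; rewrite /qbit divn_small. Qed.

Lemma qbit_addX n l : (l < 2 ^ n)%N -> qbit (l + 2 ^ n) n = true.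
Proof.
by move=> ln; rewrite /qbit -[X in (_ + X)%N]mul1n divnDMl ?expn_gt0 // divn_small.
Qed.

Lemma qbit_addX_lt n l k : (k < n)%N -> qbit (l + 2 ^ n) k = qbit l k.
Proof.
move=> kn; rewrite /qbit -(subnK (ltnW kn)) expnD divnDMl ?expn_gt0 //.
have nk : (n - k != 0)%N by rewrite -lt0n subn_gt0.
by rewrite oddD oddX (negbTE nk) addbF.
Qed.

(* Distributivity over all bit strings of length [n]: the basis index [l] runs
   through every assignment [k |-> qbit l k]. *)
Lemma sum_prod_qbit (R : comNzRingType) n (f : 'I_n -> bool -> R) :
  \sum_(l < 2 ^ n) \prod_(k < n) f k (qbit l k) = \prod_(k < n) (f k false + f k true).
Proof.
elim: n f => [|n IHn] f; first by rewrite expn0 big_ord1 !big_ord0.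
rewrite -(big_mkord xpredT (fun l => \prod_(k < n.+1) f k (qbit l k))).
rewrite expnS mul2n -addnn (big_cat_nat _ (leq_addr _ _)) //= (big_addn 0 _ (2 ^ n)).
rewrite addnK big_ord_recr /= mulrDr -(IHn (fun k => f (widen_ord (leqnSn n) k))).
rewrite !big_distrl !big_mkord; congr (_ + _); apply: eq_bigr => l _.
  by rewrite big_ord_recr /= qbit_small.
rewrite big_ord_recr /= qbit_addX //; congr (_ * _).
by apply: eq_bigr => k _; rewrite qbit_addX_lt.
Qed.

Definition pmul n (s t : pauli_label n) : pauli_label n := [ffun k => qmul (s k) (t k)].
Definition phase n (s t : pauli_label n) : algC := \prod_(k < n) qphase (s k) (t k).
Definition anticomm n (s t : pauli_label n) : bool :=
  \big[addb/false]_(k < n) qanti (s k) (t k).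

Lemma sign_anticomm n (s t : pauli_label n) :
  (-1) ^+ anticomm s t = \prod_(k < n) (-1) ^+ qanti (s k) (t k) :> algC.
Proof.
by rewrite /anticomm (big_morph _ (@signr_addb algC) (erefl : (-1) ^+ false = 1 :> algC)).
Qed.

Lemma anticommC n (s t : pauli_label n) : anticomm t s = anticomm s t.
Proof. by apply: eq_bigr => k _; rewrite qantiC. Qed.

Lemma anticommxx n (s : pauli_label n) : anticomm s s = false.
Proof. by rewrite /anticomm big1 // => k _; rewrite qantixx. Qed.

Lemma anticomm_pmull n (s t z : pauli_label n) :
  anticomm (pmul s t) z = anticomm s z (+) anticomm t z.
Proof.
rewrite /anticomm -big_split /=; apply: eq_bigr => k _.
by rewrite ffunE qanti_mull.
Qed.

Lemma pmulC n (s t : pauli_label n) : pmul t s = pmul s t.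
Proof. by apply/ffunP => k; rewrite !ffunE qmulC. Qed.

Lemma phaseC n (s t : pauli_label n) : phase t s = (-1) ^+ anticomm s t * phase s t.
Proof.
rewrite sign_anticomm /phase -big_split; apply: eq_bigr => k _; exact: qphaseC.
Qed.

Lemma phase_sqr n (s t : pauli_label n) : phase s t ^+ 2 = (-1) ^+ anticomm s t.
Proof. by rewrite sign_anticomm -prodrXl; apply: eq_bigr => k _; rewrite qphase_sqr. Qed.

Lemma phase_neq0 n (s t : pauli_label n) : phase s t != 0.
Proof. by rewrite -sqrf_eq0 phase_sqr signr_eq0. Qed.

Lemma pauli_mxM n (s t : pauli_label n) :
  pauli_mx s *m pauli_mx t = phase s t *: pauli_mx (pmul s t).
Proof.
apply/matrixP => i j; rewrite !mxE.
under eq_bigr => l _ do rewrite !mxE -big_split /=.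
rewrite (sum_prod_qbit (fun k c => pauli1 (s k) (qbit i k) c * pauli1 (t k) c (qbit j k))).
rewrite /phase -big_split; apply: eq_bigr => k _.
by rewrite pauli1_mul ffunE.
Qed.

Lemma pauli_mxC n (s t : pauli_label n) :
  pauli_mx t *m pauli_mx s = (-1) ^+ anticomm s t *: (pauli_mx s *m pauli_mx t).
Proof. by rewrite !pauli_mxM scalerA pmulC phaseC. Qed.

(* [s s] is the identity string, whose [(0, 0)] entry is [1]. *)
Lemma pauli_mx_neq0 n (s : pauli_label n) : pauli_mx s != 0.
Proof.
have ss1 : pauli_mx s *m pauli_mx s = pauli_mx [ffun _ => ord0].
  rewrite pauli_mxM /phase big1 ?scale1r => [|k _]; last exact: qphasexx.
  by congr pauli_mx; apply/ffunP => k; rewrite !ffunE qmulxx.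
apply/eqP => s0; move: ss1; rewrite s0 mul0mx.
move=> /esym/matrixP/(_ (Ordinal (expn_gt0 2 n)) (Ordinal (expn_gt0 2 n))).
rewrite !mxE big1 => [/eqP|k _]; first by rewrite oner_eq0.
by rewrite ffunE qbit0n.
Qed.

Lemma mx_comm_pauli n (s t : pauli_label n) :
  mx_comm (pauli_mx s) (pauli_mx t)
  = ((1 - (-1) ^+ anticomm s t) * phase s t) *: pauli_mx (pmul s t).
Proof.
by rewrite /mx_comm (pauli_mxC s t) -{1}[_ *m _]scale1r -scalerBl pauli_mxM scalerA.
Qed.

Lemma mx_comm_pauli_neq0 n (s t : pauli_label n) :
  (mx_comm (pauli_mx s) (pauli_mx t) != 0) = anticomm s t.
Proof.
rewrite mx_comm_pauli scaler_eq0 mulf_eq0 (negbTE (phase_neq0 s t)).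
rewrite (negbTE (pauli_mx_neq0 _)) !orbF subr_eq0.
case: (anticomm s t); rewrite ?eqxx // expr1 -subr_eq0 opprK.
by rewrite -[1 + 1]/(2%:R) pnatr_eq0.
Qed.

Lemma mx_commZ m a b (A B : 'M[algC]_m) :
  mx_comm (a *: A) (b *: B) = (a * b) *: mx_comm A B.
Proof. by rewrite /mx_comm -!scalemxAl -!scalemxAr !scalerA mulrC scalerBr. Qed.

Lemma in_span_iRZ n (G : {set pauli_label n}) r M :
  r \is Num.real -> in_span_iR G M -> in_span_iR G (r *: M).
Proof.
move=> r_real [c [c_real ->]]; exists (fun s => r * c s); split.
  by move=> s; rewrite rpredM.
by rewrite scaler_sumr; apply: eq_bigr => s _; rewrite scalerA.
Qed.

Lemma in_span_iR_basis n (G : {set pauli_label n}) s :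
  s \in G -> in_span_iR G ('i *: pauli_mx s).
Proof.
move=> Gs; exists (fun t => (t == s)%:R); split => [t|]; first exact: realn.
rewrite (bigD1 s) //= eqxx scale1r big1 ?addr0 // => t /andP[_ /negbTE ->].
by rewrite scale0r.
Qed.

Lemma is_pauli_string_pmul n (u y : pauli_label n) :
  anticomm u y -> is_pauli_string (pmul u y).
Proof.
apply: contraLR => /existsPn pmul0.
have := anticomm_pmull u y u; rewrite anticommxx (anticommC y u) /= => <-.
by rewrite /anticomm big1 // => k _; move/negPn/eqP: (pmul0 k) => ->.
Qed.

Section LieClosure.

Variables (n : nat) (G : {set pauli_label n}).
Hypothesis Glie : forall A B : 'M[algC]_(2 ^ n),
  in_span_iR G A -> in_span_iR G B -> in_span_iR G (mx_comm A B).
Hypothesis Gfull : forall s : pauli_label n,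
  is_pauli_string s -> in_span_iR G ('i *: pauli_mx s) -> s \in G.

(* [[i u, i y] = -2 (phase u y) (pmul u y)], and [i * phase u y] is real as its
   square is [1]. *)
Lemma pmul_mem u y : u \in G -> y \in G -> anticomm u y -> pmul u y \in G.
Proof.
move=> Gu Gy uy; apply: Gfull; first exact: is_pauli_string_pmul.
have := Glie (in_span_iR_basis Gu) (in_span_iR_basis Gy).
rewrite mx_commZ mx_comm_pauli uy scalerA.
have ii : 'i * 'i = -1 :> algC by rewrite -expr2 sqrCi.
have pp : phase u y * phase u y = -1 by rewrite -expr2 phase_sqr uy.
have iphase_real : 'i * phase u y \is Num.real.
  have : ('i * phase u y) ^+ 2 == 1 by rewrite expr2 mulrACA ii pp mulrNN mulr1.
  by rewrite sqrf_eq1 => /orP[/eqP-> | /eqP->]; rewrite ?rpredN real1.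
set c := (X in X *: pauli_mx _) => span_comm.
have -> : 'i *: pauli_mx (pmul u y) = ('i * phase u y / 2) *: (c *: pauli_mx (pmul u y)).
  by rewrite scalerA /c; congr (_ *: _); field: pp ii.
by apply: in_span_iRZ span_comm; rewrite rpredM ?rpredV ?realn.
Qed.

End LieClosure.

Section CommonNeighbour.

Variables (T : finType) (V : {set T}) (e : rel T).
Hypothesis eC : symmetric e.
Hypothesis e_mul : forall u y, u \in V -> y \in V -> e u y ->
  exists2 w, w \in V & forall z, e w z = e u z (+) e y z.

Let eV : rel T := fun s t => [&& s \in V, t \in V & e s t].

Definition within_two (b c : T) :=
  [\/ c = b, eV b c | exists2 g, g \in V & e g b /\ e g c].

Lemma within_two_step b y x :
  b \in V -> eV y x -> within_two b y -> within_two b x.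
Proof.
move=> Vb /and3P[Vy Vx eyx] [yb | /and3P[_ _ eby] | [g Vg [egb egy]]].
- by apply: Or32; rewrite /eV Vb Vx -yb.
- have [ebx | nebx] := boolP (e b x); first by apply: Or32; rewrite /eV Vb Vx.
  by apply: Or33; exists y; rewrite // eC.
have [egx | negx] := boolP (e g x); first by apply: Or33; exists g.
have [eby | neby] := boolP (e b y); first by apply: Or33; exists y; rewrite // eC.
have [w Vw ew] := e_mul Vg Vy egy.
by apply: Or33; exists w; rewrite // !ew egb (eC y b) (negbTE neby) (negbTE negx) eyx.
Qed.

Lemma connect_within_two b c : b \in V -> connect eV b c -> within_two b c.
Proof.
move=> Vb /connectP[p bp ->]; elim/last_ind: p bp => [_ | p x IHp]; first exact: Or31.
rewrite rcons_path last_rcons => /andP[bp epx].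
exact: within_two_step epx (IHp bp).
Qed.

Lemma connect_common_neighbour b1 b2 :
  b1 \in V -> b1 != b2 -> ~~ e b1 b2 -> connect eV b1 b2 ->
  exists2 g, g \in V & e g b1 /\ e g b2.
Proof.
move=> Vb1 b12 ne12 /(connect_within_two Vb1)[E | /and3P[_ _ e12] | //].
- by rewrite E eqxx in b12.
- by rewrite e12 in ne12.
Qed.

End CommonNeighbour.

Unset Implicit Arguments.
Theorem theoremC1 (n : nat) (G : {set pauli_label n})
  (HG : forall s, s \in G -> is_pauli_string s)
  (Hlie : forall A B : 'M[algC]_(2 ^ n),
      in_span_iR G A -> in_span_iR G B -> in_span_iR G (mx_comm A B))
  (Hfull : forall s : pauli_label n, is_pauli_string s ->
      in_span_iR G ('i *: pauli_mx s) -> s \in G)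
  (b1 b2 : pauli_label n) (Hb1 : b1 \in G) (Hb2 : b2 \in G) (Hneq : b1 != b2)
  (Hcomm : mx_comm (pauli_mx b1) (pauli_mx b2) = 0)
  (Hconn : connect (frustr G) b1 b2) :
  exists2 g, g \in G &
    (mx_comm (pauli_mx g) (pauli_mx b1) != 0) /\
    (mx_comm (pauli_mx g) (pauli_mx b2) != 0).
Proof.
pose e : rel (pauli_label n) := fun s t => mx_comm (pauli_mx s) (pauli_mx t) != 0.
have eC : symmetric e by move=> s t; rewrite /e !mx_comm_pauli_neq0 anticommC.
have e_mul u y : u \in G -> y \in G -> e u y ->
    exists2 w, w \in G & forall z, e w z = e u z (+) e y z.
  rewrite /e mx_comm_pauli_neq0 => Gu Gy uy.
  exists (pmul u y) => [|z]; first exact: pmul_mem.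
  by rewrite !mx_comm_pauli_neq0 anticomm_pmull.
apply: (connect_common_neighbour eC e_mul Hb1 Hneq _ Hconn).
by rewrite /e Hcomm eqxx.
Qed.
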